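(* Let $\ell\colon X\times U\rightarrow\mathbb{R}$ and $g\colon X\times U\rightarrow \mathbb{R}^m$ be convex functions and let $f_d\colon X\times U\rightarrow X$ be an affine function. If $(U,G)\colon X\rightarrow X$ is the one-step bifunction in $\mathbf{Para}(\textnormal{\textbf{Conv}})$ generated by these functions, namely $G((u, x), x') = \ell(x,u) + \delta(x' \mid f_d(x,u)) + \delta(x,u \mid g(x,u) \leq 0)$, then the $N$-fold composite $(U,G)^N$ in $\mathbf{Para}(\textnormal{\textbf{Conv}})$ is the parameterized convex bifunction representation of the MPC optimization problem associated with $f_d, \ell$, and $g$ over a prediction horizon of $N$, i.e. $(U,G)^N((u_{N-1},\dots,u_0,x_0),x_N) = \inf_{x_1,\dots,x_{N-1}}\big[\sum_{i=0}^{N-1}\ell(x_i,u_i)+\delta(x_{i+1} \mid f_d(x_i,u_i)) + \delta(x_i,u_i \mid g(x_i,u_i)\leq 0)\big]$.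
   Context: $X,U$ are Euclidean spaces. A convex bifunction from $A$ to $B$ is a jointly convex function $A\times B\to\mathbb{R}\cup\{\pm\infty\}$; $\textnormal{\textbf{Conv}}$ is the symmetric monoidal category of Euclidean spaces and convex bifunctions, with composition $(G\circ F)(u,y)=\inf_x\{F(u,x)+G(x,y)\}$ and monoidal product given by direct sum on spaces and pointwise sum on bifunctions. $\mathbf{Para}(\textnormal{\textbf{Conv}})$ has morphisms $X\to Y$ given by pairs $(U,F)$ with $F$ a convex bifunction from $U\oplus X$ to $Y$; the composite of $(U_1,f)\colon X\to Y$ and $(U_2,g)\colon Y\to Z$ is $(U_2\oplus U_1, g\circ(\mathrm{id}_{U_2}\oplus f))$. $\delta(x'\mid y)$ is $0$ if $x'=y$ and $+\infty$ otherwise; $\delta(x,u\mid g(x,u)\le0)$ is the indicator of $\{(x,u):g(x,u)\le 0\}$. The MPC problem minimizes $\sum\ell(x_i,u_i)$ subject to $x_{i+1}=f_d(x_i,u_i)$ and $g(x_i,u_i)\le 0$ over the horizon. *)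

From HB Require Import structures.
From mathcomp Require Import all_boot all_order all_algebra.
From mathcomp Require Import all_classical all_reals all_analysis.
Set Implicit Arguments. Unset Strict Implicit. Unset Printing Implicit Defensive.
Import Order.TTheory GRing.Theory Num.Theory.
Local Open Scope ring_scope.
Local Open Scope classical_set_scope.

Section ConvBifun.
Variable R : realType.
Local Open Scope ereal_scope.

Definition cdelta (A : Type) (a b : A) : \bar R :=
  if `[< a = b >] then 0 else +oo.

Definition cindicator (A : Type) (S : set A) (a : A) : \bar R :=
  if `[< S a >] then 0 else +oo.

Definition conv_comp (A B C : Type) (F : A -> B -> \bar R) (G : B -> C -> \bar R)
  : A -> C -> \bar R :=
  fun a c => ereal_inf [set F a b + G b c | b in [set: B]].

Definition conv_oplus (A1 A2 B1 B2 : Type) (F : A1 -> B1 -> \bar R)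
  (H : A2 -> B2 -> \bar R) : (A1 * A2) -> (B1 * B2) -> \bar R :=
  fun a b => F a.1 b.1 + H a.2 b.2.

(* Para(Conv): a morphism X -> Y with parameter space P is a bifunction
   from P (+) X to Y, represented as P * X -> Y -> \bar R. *)
Definition para_id (X : Type) : (unit * X) -> X -> \bar R :=
  fun px y => @cdelta X px.2 y.

(* composite of (P1,f) : X -> Y and (P2,g) : Y -> Z is
   (P2 (+) P1, g o (id_{P2} (+) f)) ; the direct sum (P2 (+) P1) (+) X
   is identified with P2 (+) (P1 (+) X) by reassociation. *)
Definition para_comp (P1 P2 X Y Z : Type)
  (f : (P1 * X) -> Y -> \bar R) (g : (P2 * Y) -> Z -> \bar R)
  : ((P2 * P1) * X) -> Z -> \bar R :=
  fun ppx z =>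
    conv_comp (conv_oplus (@cdelta P2) f) g (ppx.1.1, (ppx.1.2, ppx.2)) z.

Fixpoint paramN (U : Type) (N : nat) : Type :=
  if N is N'.+1 then (U * paramN U N')%type else unit.

Fixpoint para_pow (U X : Type) (G : (U * X) -> X -> \bar R) (N : nat)
  : (paramN U N * X) -> X -> \bar R :=
  match N return (paramN U N * X) -> X -> \bar R with
  | 0 => @para_id X
  | N'.+1 => para_comp (@para_pow U X G N') G
  end.

(* the i-th control u_i of a parameter (u_{N-1}, ..., u_0) *)
Fixpoint ctrl (U : Type) (u0 : U) (N : nat) : paramN U N -> nat -> U :=
  match N return paramN U N -> nat -> U with
  | 0 => fun _ _ => u0
  | N'.+1 => fun p i => if i == N' then p.1 else ctrl u0 p.2 i
  end.

End ConvBifun.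

Section MPC.
Variables (R : realType) (n k m : nat).
Local Notation X := 'rV[R]_n.
Local Notation U := 'rV[R]_k.

Definition convex_XU (h : X -> U -> R) : Prop :=
  forall (x1 x2 : X) (u1 u2 : U) (t : R), 0 <= t <= 1 ->
    h (t *: x1 + (1 - t) *: x2) (t *: u1 + (1 - t) *: u2)
      <= t * h x1 u1 + (1 - t) * h x2 u2.

Definition affine_XU (f : X -> U -> X) : Prop :=
  forall (x1 x2 : X) (u1 u2 : U) (t : R),
    f (t *: x1 + (1 - t) *: x2) (t *: u1 + (1 - t) *: u2)
      = t *: f x1 u1 + (1 - t) *: f x2 u2.

Definition stage (ell : X -> U -> R) (fd : X -> U -> X) (g : X -> U -> 'rV[R]_m)
  (x : X) (u : U) (x' : X) : \bar R :=
  ((ell x u)%:E + @cdelta R X x' (fd x u)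
   + @cindicator R (X * U) [set xu : X * U | forall j, (g xu.1 xu.2 ord0 j <= 0)%R] (x, u))%E.

Definition one_step (ell : X -> U -> R) (fd : X -> U -> X) (g : X -> U -> 'rV[R]_m)
  : (U * X) -> X -> \bar R :=
  fun ux x' => stage ell fd g ux.2 ux.1 x'.

End MPC.

From HB Require Import structures.
From mathcomp Require Import all_boot all_order all_algebra.
From mathcomp Require Import all_classical all_reals all_analysis.
Import Order.TTheory GRing.Theory Num.Theory.
Local Open Scope ring_scope.
Local Open Scope classical_set_scope.

(* Because the stage cost is +oo off the graph of the dynamics, every infimum
   in the composite (U,G)^N is attained at a single point: the N-fold
   composite evaluated at (p, x0) is the cost along the trajectory that p
   generates from x0, plus the indicator that this trajectory ends at xN.
   Conversely, each path from x0 to xN bounds the composite from above, by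
   choosing that path as the intermediate state at every composition. *)

Section ExtendedReals.
Variable R : realType.
Local Open Scope ereal_scope.

Lemma cdelta_id (A : Type) (a : A) : @cdelta R A a a = 0.
Proof. by rewrite /cdelta; case: asboolP. Qed.

Lemma cdelta_neq (A : Type) (a b : A) : a <> b -> @cdelta R A a b = +oo.
Proof. by rewrite /cdelta; case: asboolP. Qed.

Lemma cdelta_ninfty (A : Type) (a b : A) : @cdelta R A a b != -oo.
Proof. by rewrite /cdelta; case: asboolP. Qed.

Lemma ereal_inf_supported (T : Type) (F : T -> \bar R) (t0 : T) :
  (forall t, t <> t0 -> F t = +oo) -> ereal_inf [set F t | t in [set: T]] = F t0.
Proof.
move=> Foff; apply/le_anti/andP; split; first exact: ereal_inf_lbound.
apply: le_ereal_inf_tmp => _ [t _ <-].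
by have [->|/Foff ->] := pselect (t = t0); rewrite ?leey.
Qed.

End ExtendedReals.

Section ParaPowPaths.
Variables (R : realType) (U X : Type) (u0 : U).
Variable G : U * X -> X -> \bar R.
Local Open Scope ereal_scope.
Local Notation Gpow N := (@para_pow R U X G N).

Definition path_cost {N} (p : paramN U N) (xs : nat -> X) : \bar R :=
  \sum_(i < N) G (ctrl u0 p i, xs i) (xs i.+1).

Lemma path_cost_cons N u (p : paramN U N) xs :
  path_cost ((u, p) : paramN U N.+1) xs
  = path_cost p xs + G (u, xs N) (xs N.+1).
Proof.
rewrite /path_cost big_ord_recr /= eqxx; congr (_ + _).
by apply: eq_bigr => i _; rewrite ltn_eqF.
Qed.

Lemma eq_path_cost N (p : paramN U N) xs ys :
  (forall i, (i <= N)%N -> xs i = ys i) -> path_cost p xs = path_cost p ys.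
Proof.
move=> eq_xy; apply: eq_bigr => i _.
by rewrite !eq_xy // ltnW.
Qed.

Lemma para_pow_le_step N u (p : paramN U N) x y z :
  Gpow N.+1 ((u, p), x) z <= Gpow N (p, x) y + G (u, y) z.
Proof.
apply: ereal_inf_lbound; exists (u, y) => //.
by rewrite /conv_oplus /= cdelta_id add0e.
Qed.

Lemma para_pow_le_path_cost N (p : paramN U N) xs :
  Gpow N (p, xs 0%N) (xs N) <= path_cost p xs.
Proof.
elim: N p => [|N IH] p; first by rewrite /= /para_id cdelta_id /path_cost big_ord0.
case: p => u p; rewrite path_cost_cons.
have step := para_pow_le_step N u p (xs 0%N) (xs N) (xs N.+1).
exact: (le_trans step (leeD (IH p) (lexx _))).
Qed.

Section Deterministic.
Variable f : X -> U -> X.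
Hypothesis G_ninfty : forall ux y, G ux y != -oo.
Hypothesis G_off_graph : forall u x y, y <> f x u -> G (u, x) y = +oo.

Fixpoint traj {N} (p : paramN U N) (x : X) (i : nat) : X :=
  if i is i'.+1 then f (traj p x i') (ctrl u0 p i') else x.

Lemma traj_cons N u (p : paramN U N) x i :
  (i <= N)%N -> traj ((u, p) : paramN U N.+1) x i = traj p x i.
Proof.
elim: i => [//|i IH] ltiN /=.
by rewrite IH ?(ltnW ltiN) // (ltn_eqF ltiN).
Qed.

Lemma traj_cons_last N u (p : paramN U N) x :
  traj ((u, p) : paramN U N.+1) x N.+1 = f (traj p x N) u.
Proof. by rewrite /= traj_cons // (eqxx N). Qed.

Lemma path_cost_ninfty N (p : paramN U N) xs : path_cost p xs != -oo.
Proof.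
apply: (big_ind (fun e : \bar R => e != -oo)) => // a b a_fin b_fin.
by rewrite adde_eq_ninfty negb_or a_fin b_fin.
Qed.

Lemma G_graph_split u x y : G (u, x) y = G (u, x) (f x u) + @cdelta R X (f x u) y.
Proof.
have [->|ne] := pselect (y = f x u); first by rewrite cdelta_id adde0.
by rewrite G_off_graph // cdelta_neq 1?addey // => /esym.
Qed.

Lemma para_pow_traj N (p : paramN U N) x y :
  Gpow N (p, x) y = path_cost p (traj p x) + @cdelta R X (traj p x N) y.
Proof.
elim: N p x y => [|N IH] p x y; first by rewrite /path_cost big_ord0 add0e.
case: p => u p /=; rewrite /para_comp /conv_comp /conv_oplus /=.
rewrite (@ereal_inf_supported _ _ _ (u, traj p x N)) /=; last first.
  move=> [u' x'] /= ne; rewrite IH.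
  have [eu|neu] := pselect (u = u').
    rewrite -eu cdelta_id add0e cdelta_neq; last by move=> ex; apply: ne; rewrite eu ex.
    by rewrite addey ?path_cost_ninfty // addye.
  rewrite cdelta_neq // addye ?addye //.
  by rewrite adde_eq_ninfty negb_or path_cost_ninfty cdelta_ninfty.
rewrite cdelta_id add0e IH cdelta_id adde0 path_cost_cons (eqxx N).
rewrite traj_cons_last traj_cons //.
rewrite -addeA -G_graph_split; congr (_ + _).
by apply: eq_path_cost => i leiN; rewrite traj_cons.
Qed.

Theorem para_pow_inf_paths N (p : paramN U N) x0 xN :
  Gpow N (p, x0) xN
  = ereal_inf [set path_cost p xs | xs in [set xs | xs 0%N = x0 /\ xs N = xN]].
Proof.
apply/le_anti/andP; split.
  apply: le_ereal_inf_tmp => _ [xs [<- <-] <-].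
  exact: para_pow_le_path_cost.
rewrite para_pow_traj; have [<-|ne] := pselect (traj p x0 N = xN).
  by apply: ereal_inf_lbound; exists (traj p x0) => //; rewrite cdelta_id adde0.
by rewrite cdelta_neq // addey ?path_cost_ninfty ?leey.
Qed.

End Deterministic.
End ParaPowPaths.

Section OneStep.
Variables (R : realType) (n k m : nat).
Variables (ell : 'rV[R]_n -> 'rV[R]_k -> R) (g : 'rV[R]_n -> 'rV[R]_k -> 'rV[R]_m)
  (fd : 'rV[R]_n -> 'rV[R]_k -> 'rV[R]_n).
Local Open Scope ereal_scope.

Lemma one_step_ninfty ux y : one_step ell fd g ux y != -oo.
Proof.
rewrite /one_step /stage /cdelta /cindicator.
by case: asboolP => _; case: asboolP => _; rewrite ?adde0 ?addey ?addye.
Qed.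

Lemma one_step_off_graph u x y : y <> fd x u -> one_step ell fd g (u, x) y = +oo.
Proof.
move=> ne; rewrite /one_step /stage cdelta_neq // addey // addye //.
by rewrite /cindicator; case: asboolP.
Qed.

End OneStep.

(* Only the shape of the stage cost matters: the convexity and affinity
   hypotheses (which make (U,G) a morphism of Conv) and [0 < N] are unused. *)
Theorem mainTheorem4 (R : realType) (n k m : nat)
  (ell : 'rV[R]_n -> 'rV[R]_k -> R) (g : 'rV[R]_n -> 'rV[R]_k -> 'rV[R]_m)
  (fd : 'rV[R]_n -> 'rV[R]_k -> 'rV[R]_n)
  (hell : convex_XU ell) (hg : forall j, convex_XU (fun x u => g x u ord0 j))
  (hfd : affine_XU fd)
  (N : nat) (hN : (0 < N)%N)
  (p : paramN 'rV[R]_k N) (x0 xN : 'rV[R]_n) :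
  @para_pow R _ _ (one_step ell fd g) N (p, x0) xN =
  ereal_inf [set (\sum_(i < N) stage ell fd g (xs i) (@ctrl _ 0%R N p i) (xs i.+1))%E
            | xs in [set xs : nat -> 'rV[R]_n | xs 0%N = x0 /\ xs N = xN]].
Proof.
exact: (@para_pow_inf_paths R _ _ 0%R (one_step ell fd g) fd
          (@one_step_ninfty R n k m ell g fd) (@one_step_off_graph R n k m ell g fd)
          N p x0 xN).
Qed.
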